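(* Let $\mathcal C\subseteq\mathcal L_{n,q}$ be an $\mathbb F_{q^n}$-linear rank metric code of dimension $k$ which contains an MRD code $\mathcal G$ equivalent to a generalized Gabidulin code $\mathcal G_{l,s}$ of dimension $l\le k$ (with $\gcd(s,n)=1$). Then there exist an invertible (permutation) linearized polynomial $p(x)$ and $k-l$ linearized polynomials $q_1(x),\ldots,q_{k-l}(x)$ such that \[\mathcal C=\langle q_1(x),\ldots,q_{k-l}(x),p(x),p(x)^{[s]},\ldots,p(x)^{[s(l-1)]}\rangle_{\mathbb F_{q^n}}.\]
   Context: $q$ is a prime power, $[i]:=q^i$. $\mathcal L_{n,q}$ is the $\mathbb F_{q^n}$-vector space of linearized polynomials $f(x)=\sum_{i=0}^{n-1}a_ix^{[i]}$, $a_i\in\mathbb F_{q^n}$, identified with $\mathbb F_q$-linear maps of $\mathbb F_{q^n}$; a permutation (invertible) polynomial is one inducing a bijection. A rank metric code here is an $\mathbb F_q$-subspace of $\mathcal L_{n,q}$ with rank distance $d(f,g)=\mathrm{rk}(f-g)$; it is MRD if $|\mathcal C|=q^{n(n-d+1)}$, $d$ the minimum distance. For $f(x)=\sum_i a_ix^{[i]}$, $f(x)^{[j]}:=x^{[j]}\circ f(x)=\sum_i a_i^{[j]}x^{[(i+j)\bmod n]}$. $\mathcal G_{l,s}=\langle x,x^{[s]},\ldots,x^{[s(l-1)]}\rangle_{\mathbb F_{q^n}}$ with $\gcd(s,n)=1$. Two codes $\mathcal C,\mathcal C'$ are equivalent if there are invertible $h,g\in\mathcal L_{n,q}$ and a field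 automorphism $\sigma$ (acting on coefficients) with $\{h\circ f^\sigma\circ g\colon f\in\mathcal C\}=\mathcal C'$. *)

From HB Require Import structures.
From mathcomp Require Import all_boot all_order all_algebra all_field.
Set Implicit Arguments. Unset Strict Implicit. Unset Printing Implicit Defensive.
Import GRing.Theory.
Local Open Scope ring_scope.

(* Setting: L is the finite field F_{q^n} (#|L| = q^n).  A linearized
   polynomial f(x) = sum_{i<n} a_i x^{[i]} is represented by its coefficient
   row vector (a_0,...,a_{n-1}) : 'rV[L]_n, which is an L-vector space
   (vectType L); F_{q^n}-linear codes are {vspace 'rV[L]_n}. *)

Section LinPoly.
Variables (L : finFieldType) (q n : nat).

Definition lev (f : 'rV[L]_n) (x : L) : L :=
  \sum_(i < n) f 0 i * x ^+ (q ^ i)%N.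

Definition linvertible (f : 'rV[L]_n) : Prop := bijective (lev f).

(* rank of f: dimension over F_q of its image, i.e. the m with #|Im f| = q^m *)
Definition lrank (f : 'rV[L]_n) : nat :=
  trunc_log q #|[set lev f x | x : L]|.

(* minimum rank distance of a code (n.+1 for the zero code) *)
Definition min_dist (C : {vspace 'rV[L]_n}) : nat :=
  \big[minn/n.+1]_(f : 'rV[L]_n | (f \in C) && (f != 0)) lrank f.

Definition MRD (C : {vspace 'rV[L]_n}) : Prop :=
  #|[set f : 'rV[L]_n | f \in C]| = (q ^ (n * (n - min_dist C + 1)))%N.

(* f(x)^{[j]} = x^{[j]} o f(x) = sum_i a_i^{[j]} x^{[(i+j) mod n]} *)
Definition lfrob (j : nat) (f : 'rV[L]_n) : 'rV[L]_n :=
  \row_(k < n) \sum_(i < n | ((i + j) %% n)%N == k :> nat) f 0 i ^+ (q ^ j)%N.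

Definition lmon (t : nat) : 'rV[L]_n := \row_(k < n) ((t %% n)%N == k :> nat)%:R.

Definition gabidulin (l s : nat) : {vspace 'rV[L]_n} :=
  <<[seq lmon (s * i) | i <- iota 0 l]>>%VS.

(* equivalence: C' = { h o f^sigma o g : f in C } with h, g invertible and
   sigma a field automorphism acting on coefficients; composition is
   expressed through the induced maps (linearized polynomials of q-degree
   < n are in bijection with F_q-linear maps of L). *)
Definition code_equiv (C C' : {vspace 'rV[L]_n}) : Prop :=
  exists (h g : 'rV[L]_n) (sigma : {rmorphism L -> L}),
    [/\ linvertible h, linvertible g, bijective sigma &
      forall f' : 'rV[L]_n, f' \in C' <->
        exists2 f, f \in C &
          lev f' =1 (lev h \o lev (map_mx sigma f) \o lev g)].

End LinPoly.

From HB Require Import structures.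
From mathcomp Require Import all_boot all_order all_algebra all_fingroup all_solvable all_field.
From mathcomp Require Import zify ring.
Set Implicit Arguments. Unset Strict Implicit. Unset Printing Implicit Defensive.
Import GRing.Theory.
Local Open Scope ring_scope.

(* Write G_{l,s} = {h o f^sigma o g : f in G}.  The preimage p in G of the
   monomial x satisfies h o p^sigma o g = id, so p is invertible.  If l < n,
   then for every scalar mu the image of (sigma^-1 mu) p is a word of G_{l,s}
   all of whose compositions with x^[sj], j < l, stay in G_{l,s}; comparing
   supports shows that it is a scalar multiple of x, i.e. h(mu u) = c_mu h(u).
   Hence u |-> h(u)/h(1) is multiplicative, which makes p^[sj] a scalar multiple
   of the preimage of x^[sj], so p^[sj] lies in G for j < l (trivially if
   l = n).  These l words are independent because composing with the
   invertible p is injective, and completing them to a basis of C gives the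
   q_i. *)

Lemma seq_iota_mktuple (T : Type) (F : nat -> T) l :
  [seq F i | i <- iota 0 l] = [tuple F i | i < l] :> seq T.
Proof. by rewrite /= -val_enum_ord -map_comp. Qed.

Lemma sum_ord_pick (R : nmodType) N (c : nat) (lt_cN : (c < N)%N) (F : 'I_N -> R) :
  \sum_(i < N | c == i :> nat) F i = F (Ordinal lt_cN).
Proof. by apply: big_pred1 => i; rewrite /= eq_sym -val_eqE. Qed.

Lemma coprime_mul_modn_inj s n a b : coprime s n -> (a < n)%N -> (b < n)%N ->
  (s * a %% n = s * b %% n)%N -> a = b.
Proof.
move=> cop an bn; wlog ba : a b an bn / (b <= a)%N.
  move=> W e; case: (leqP b a) => [ba | /ltnW ab]; first exact: W.
  by apply/esym/W.
move=> /eqP; rewrite eqn_mod_dvd; last by rewrite leq_mul2l ba orbT.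
rewrite -mulnBr Gauss_dvdr; last by rewrite coprime_sym.
by rewrite -eqn_mod_dvd // !modn_small // => /eqP.
Qed.

Lemma rel_onto_card (T1 T2 : finType) (A : {pred T1}) (B : {pred T2})
    (R : T1 -> T2 -> bool) :
  (#|B| <= #|A|)%N ->
  (forall a, a \in A -> exists2 b, b \in B & R a b) ->
  (forall a1 a2 b, R a1 b -> R a2 b -> a1 = a2) ->
  forall b, b \in B -> exists2 a, a \in A & R a b.
Proof.
move=> leBA totR injR b0 b0B.
pose phi a := odflt b0 [pick b in B | R a b].
have phiP a : a \in A -> (phi a \in B) && R a (phi a).
  move=> aA; rewrite /phi; case: pickP => [b /andP[bB Rab] | noR] /=.
    by rewrite bB.
  by have [b bB Rab] := totR a aA; move: (noR b); rewrite bB Rab.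
have phi_inj : {in A &, injective phi}.
  move=> a1 a2 a1A a2A e; apply: (injR a1 a2 (phi a1)).
    by case/andP: (phiP a1 a1A).
  by rewrite e; case/andP: (phiP a2 a2A).
have sub : phi @: A \subset B.
  by apply/subsetP => _ /imsetP[a aA ->]; case/andP: (phiP a aA).
have : B \subset phi @: A.
  by rewrite -(geq_leqif (subset_leqif_card sub)) card_in_imset.
move=> /subsetP /(_ b0 b0B) /imsetP [a aA ->].
by exists a => //; case/andP: (phiP a aA).
Qed.

Lemma complete_basis (K : fieldType) (vT : vectType K) (C : {vspace vT}) (X : seq vT) :
  free X -> (<<X>> <= C)%VS ->
  exists Y : (\dim C - size X).-tuple vT, C = <<(Y : seq vT) ++ X>>%VS.
Proof.
move=> freeX XC.
have dimD : \dim (C :\: <<X>>) = (\dim C - size X)%N.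
  by rewrite -(eqP freeX) -(dimv_cap_compl C <<X>>) (capv_idPr XC) addKn.
exists (tcast dimD (vbasis (C :\: <<X>>))).
rewrite span_cat val_tcast (span_basis (vbasisP _)) addv_diff.
exact/esym/addv_idPl.
Qed.

Section LinearizedPolynomials.
Variables (L : finFieldType) (q n : nat).
Hypotheses (n_gt0 : (0 < n)%N) (cardL : #|L| = (q ^ n)%N).

Lemma q_gt1 : (1 < q)%N.
Proof.
have := finNzRing_gt1 L; rewrite cardL.
by case: q => [|[|//]]; rewrite ?exp1n // exp0n.
Qed.

Lemma expr_qpow_modn (x : L) m : x ^+ (q ^ m) = x ^+ (q ^ (m %% n)).
Proof.
rewrite {1}(divn_eq m n) expnD exprM; congr (_ ^+ _).
elim: (m %/ n)%N => [|a IH]; first by rewrite mul0n expn0 expr1.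
by rewrite mulSn expnD exprM -cardL expf_card IH.
Qed.

Lemma pchar_nat_q : [pchar L].-nat q.
Proof.
have [p _ pcharLp] := finPcharP L.
have : p.-nat #|L|.
  by move: (abelem_pgroup (fin_ring_pchar_abelem pcharLp)); rewrite /pgroup cardsT.
by rewrite cardL pnatX eqn0Ngt n_gt0 orbF (eq_pnat _ (pcharf_eq pcharLp)).
Qed.

Lemma expr_qpowD (x y : L) j : (x + y) ^+ (q ^ j) = x ^+ (q ^ j) + y ^+ (q ^ j).
Proof. by apply: exprDn_pchar; rewrite pnatX pchar_nat_q. Qed.

Lemma expr_qpow0 j : (0 : L) ^+ (q ^ j) = 0.
Proof. by rewrite expr0n expn_eq0 gtn_eqF ?(ltnW q_gt1). Qed.

Lemma levD (f g : 'rV[L]_n) x : lev q (f + g) x = lev q f x + lev q g x.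
Proof. by rewrite /lev -big_split; apply: eq_bigr => i _; rewrite mxE mulrDl. Qed.

Lemma levZ (a : L) (f : 'rV[L]_n) x : lev q (a *: f) x = a * lev q f x.
Proof. by rewrite /lev mulr_sumr; apply: eq_bigr => i _; rewrite mxE mulrA. Qed.

Lemma levN (f : 'rV[L]_n) x : lev q (- f) x = - lev q f x.
Proof. by rewrite -scaleN1r levZ mulN1r. Qed.

Lemma lev0 x : lev q (0 : 'rV[L]_n) x = 0.
Proof. by rewrite /lev big1 // => i _; rewrite mxE mul0r. Qed.

Lemma lev_at0 (f : 'rV[L]_n) : lev q f 0 = 0.
Proof. by rewrite /lev big1 // => i _; rewrite expr_qpow0 mulr0. Qed.

Lemma lev_sum m (c : 'I_m -> L) (F : 'I_m -> 'rV[L]_n) x :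
  lev q (\sum_i c i *: F i) x = \sum_i c i * lev q (F i) x.
Proof. by elim/big_rec2: _ => [|i y f _ <-]; rewrite ?lev0 // levD levZ. Qed.

Lemma lev_map (sigma : {rmorphism L -> L}) (f : 'rV[L]_n) x :
  lev q (map_mx sigma f) (sigma x) = sigma (lev q f x).
Proof. by rewrite /lev rmorph_sum; apply: eq_bigr => i _; rewrite mxE rmorphM rmorphXn. Qed.

Lemma lev_lmon t x : lev q (lmon L n t) x = x ^+ (q ^ t).
Proof.
rewrite /lev; under eq_bigr do rewrite mxE mulr_natl mulrb.
by rewrite -big_mkcond (sum_ord_pick (ltn_pmod _ n_gt0)) -expr_qpow_modn.
Qed.

Lemma lev_eq0 (f : 'rV[L]_n) : lev q f =1 (fun=> 0) -> f = 0.
Proof.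
move=> f0; have q1 := q_gt1.
pose P : {poly L} := \sum_(k < n) f 0 k *: 'X^(q ^ k).
have P_root x : root P x.
  apply/rootP; rewrite -(f0 x) /P horner_sum; apply: eq_bigr => k _.
  by rewrite hornerZ hornerXn.
have sizeP : (size P <= (q ^ n.-1).+1)%N.
  apply: (leq_trans (size_sum _ _ _)); apply/bigmax_leqP => k _.
  rewrite (leq_trans (size_scale_leq _ _)) // size_polyXn ltnS leq_pexp2l ?(ltnW q1) //.
  by rewrite -ltnS prednK.
have P0 : P = 0.
  apply: contraTeq sizeP => /max_poly_roots.
  move=> /(_ _ (introT allP (fun x _ => P_root x)) (enum_uniq L)).
  rewrite -cardE cardL -ltnNge; apply: leq_trans.
  rewrite -[in X in (_ <= X)%N](prednK n_gt0) expnS ltnS.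
  have : (0 < q ^ n.-1)%N by rewrite expn_gt0 ltnW.
  nia.
apply/rowP => k; rewrite mxE.
have := congr1 (fun p : {poly L} => p`_(q ^ k)) P0.
rewrite coef0 coef_sum => <-.
rewrite (bigD1 k) //= coefZ coefXn eqxx mulr1 big1 ?addr0 // => i ik.
rewrite coefZ coefXn eqn_exp2l //.
by case: eqP => [/ord_inj ik_eq | _]; [rewrite ik_eq eqxx in ik | rewrite mulr0].
Qed.

Lemma lev_inj (f g : 'rV[L]_n) : lev q f =1 lev q g -> f = g.
Proof.
move=> fg; apply/eqP; rewrite -subr_eq0; apply/eqP/lev_eq0 => x.
by rewrite levD levN fg subrr.
Qed.

Definition lrot (r : nat) (t : 'rV[L]_n) : 'rV[L]_n :=
  \row_(k < n) \sum_(i < n | ((i + r) %% n)%N == k :> nat) t 0 i.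

Lemma lev_lrot r t x : lev q (lrot r t) x = lev q t (x ^+ (q ^ r)).
Proof.
rewrite /lev; under eq_bigr do rewrite mxE big_distrl /=.
rewrite (exchange_big_dep xpredT) //=; apply: eq_bigr => i _.
by rewrite (sum_ord_pick (ltn_pmod _ n_gt0)) -exprM -expnD addnC -expr_qpow_modn.
Qed.

Lemma lrot_entry r t (i : 'I_n) : lrot r t 0 (Ordinal (ltn_pmod (i + r) n_gt0)) = t 0 i.
Proof.
rewrite mxE (big_pred1 i) // => i' /=.
by rewrite eqn_modDr !modn_small // val_eqE.
Qed.

Lemma lfrobE j (f : 'rV[L]_n) : lfrob q j f = lrot j (map_mx (fun a => a ^+ (q ^ j)) f).
Proof. by apply/rowP => k; rewrite !mxE; apply: eq_bigr => i _; rewrite mxE. Qed.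

Lemma lev_lfrob j (f : 'rV[L]_n) x : lev q (lfrob q j f) x = lev q f x ^+ (q ^ j).
Proof.
rewrite lfrobE lev_lrot /lev.
rewrite (big_morph (fun y : L => y ^+ (q ^ j)) (fun x y => expr_qpowD x y j) (expr_qpow0 j)).
by apply: eq_bigr => i _; rewrite mxE exprMn exprAC.
Qed.

End LinearizedPolynomials.

Section GabidulinCode.
Variables (L : finFieldType) (n l s : nat).
Hypotheses (n_gt0 : (0 < n)%N) (coprime_sn : coprime s n).

Lemma lmon_in_gabidulin j : (j < l)%N -> lmon L n (s * j) \in gabidulin L n l s.
Proof. by move=> jl; apply/memv_span/map_f; rewrite mem_iota. Qed.

Lemma sum_lmon_entry (c : 'I_l -> L) (k : 'I_n) :
  (\sum_(i < l) c i *: lmon L n (s * i)) 0 k = \sum_(i < l | (s * i %% n)%N == k :> nat) c i.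
Proof.
by rewrite summxE [RHS]big_mkcond; apply: eq_bigr => i _; rewrite !mxE mulr_natr mulrb.
Qed.

Lemma gabidulin_support (v : 'rV[L]_n) (k : 'I_n) :
  v \in gabidulin L n l s -> v 0 k != 0 -> exists2 m, (m < l)%N & (s * m %% n)%N = k.
Proof.
rewrite /gabidulin seq_iota_mktuple => /coord_span ->.
under eq_bigr do rewrite nth_mktuple.
rewrite sum_lmon_entry; case: (pickP (fun i : 'I_l => (s * i %% n)%N == k)).
  by move=> i /eqP ik _; exists i.
by move=> none; rewrite big_pred0 ?eqxx.
Qed.

Lemma lmon_free_coef (c : 'I_l -> L) : (l <= n)%N ->
  \sum_(i < l) c i *: lmon L n (s * i) = 0 -> forall i, c i = 0.
Proof.
move=> ln c0 i.
have i_n : (i < n)%N := leq_trans (ltn_ord i) ln.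
have pick_i : [pred i' : 'I_l | (s * i' %% n)%N == (s * i %% n)%N] =1 pred1 i.
  move=> i' /=; apply/eqP/eqP => [|-> //].
  by move/(coprime_mul_modn_inj coprime_sn (leq_trans (ltn_ord i') ln) i_n)/ord_inj.
have := congr1 (fun v : 'rV[L]_n => v 0 (Ordinal (ltn_pmod (s * i) n_gt0))) c0.
by rewrite sum_lmon_entry mxE (big_pred1 i pick_i).
Qed.

Lemma gabidulin_free : (l <= n)%N -> free [seq lmon L n (s * i) | i <- iota 0 l].
Proof.
move=> ln; rewrite seq_iota_mktuple; apply/freeP => c.
under eq_bigr do rewrite nth_mktuple.
exact: lmon_free_coef.
Qed.

Lemma dim_gabidulin : (l <= n)%N -> \dim (gabidulin L n l s) = l.
Proof. by move=> ln; rewrite /gabidulin (eqP (gabidulin_free ln)) size_map size_iota. Qed.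

Lemma gabidulin_lrot_scalar (t : 'rV[L]_n) : (l < n)%N ->
  t \in gabidulin L n l s ->
  (forall j, (j < l)%N -> lrot (s * j) t \in gabidulin L n l s) ->
  t = t 0 (Ordinal n_gt0) *: lmon L n 0.
Proof.
move=> lt_ln tG rotG; apply/rowP => i; rewrite !mxE mod0n.
have [-> | i_neq0] := eqVneq i (Ordinal n_gt0); first by rewrite eqxx mulr1.
rewrite (_ : (0 == i :> nat) = false) ?mulr0; last first.
  by apply: (contraNF _ i_neq0) => /eqP i0; apply/eqP/val_inj; rewrite /= -i0.
apply/eqP; apply: contraNT i_neq0 => t_i.
have [m m_l smi] := gabidulin_support tG t_i.
(* Shifting by s j with j = min(l-1, n-1-m) keeps s (m + j) a support point
   s m' with m' < l, which forces m = 0. *)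
pose j := minn l.-1 (n.-1 - m).
have j_l : (j < l)%N by rewrite /j; lia.
have [m' m'_l sm'] : exists2 m', (m' < l)%N & (s * m' %% n)%N = ((i + s * j) %% n)%N.
  apply: (gabidulin_support (k := Ordinal (ltn_pmod (i + s * j) n_gt0)) (rotG j j_l)).
  by rewrite lrot_entry.
have m'E : m' = (m + j)%N.
  apply: (coprime_mul_modn_inj coprime_sn); rewrite /j; try lia.
  by rewrite sm' -smi modnDml mulnDr.
have m0 : m = 0%N by move: m'E m'_l; rewrite /j; lia.
by apply/eqP/val_inj; rewrite /= -smi m0 muln0 mod0n.
Qed.

End GabidulinCode.

Section GabidulinEquivalent.
Variables (L : finFieldType) (q n l s : nat).
Hypotheses (n_gt0 : (0 < n)%N) (cardL : #|L| = (q ^ n)%N).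
Hypotheses (coprime_sn : coprime s n) (l_le_n : (l <= n)%N).

Lemma lfrob_free (p : 'rV[L]_n) : linvertible q p ->
  free [seq lfrob q (s * i) p | i <- iota 0 l].
Proof.
move=> [p_inv pK pKV]; rewrite seq_iota_mktuple; apply/freeP => c.
under eq_bigr do rewrite nth_mktuple.
move=> c0; apply: (lmon_free_coef n_gt0 coprime_sn l_le_n); apply: (lev_inj n_gt0 cardL) => y.
have := congr1 (fun w => lev q w (p_inv y)) c0.
rewrite /= !lev0 !lev_sum => c0y; rewrite -[RHS]c0y; apply: eq_bigr => i _.
by rewrite (lev_lmon n_gt0 cardL) (lev_lfrob n_gt0 cardL) pKV.
Qed.

Variables (G : {vspace 'rV[L]_n}) (h g : 'rV[L]_n) (sigma : {rmorphism L -> L}).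
Hypotheses (dimG : \dim G = l) (h_bij : linvertible q h) (g_bij : linvertible q g).
Hypothesis sigma_bij : bijective sigma.
Hypothesis gabidulin_eqv : forall f', f' \in gabidulin L n l s <->
  exists2 f, f \in G & lev q f' =1 (lev q h \o lev q (map_mx sigma f) \o lev q g).

Lemma eqv_in_gabidulin f : f \in G -> exists2 t, t \in gabidulin L n l s &
  forall x, lev q t x = lev q h (lev q (map_mx sigma f) (lev q g x)).
Proof.
move=> fG; pose R (t f : 'rV[L]_n) :=
  [forall x, lev q t x == lev q h (lev q (map_mx sigma f) (lev q g x))].
(* [code_equiv] only transports words of G_{l,s} back to G; the converse
   direction comes from counting, as both codes have dimension l. *)
have card_le : (#|G| <= #|gabidulin L n l s|)%N.
  by rewrite !card_vspace dimG dim_gabidulin.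
have R_total t : t \in gabidulin L n l s -> exists2 f', f' \in G & R t f'.
  by case/gabidulin_eqv => f' f'G Ef'; exists f' => //; apply/forallP => x; rewrite Ef'.
have R_inj t1 t2 f' : R t1 f' -> R t2 f' -> t1 = t2.
  move=> /forallP R1 /forallP R2; apply: (lev_inj n_gt0 cardL) => x.
  by rewrite (eqP (R1 x)) (eqP (R2 x)).
have [t tG /forallP Rt] := rel_onto_card card_le R_total R_inj fG.
by exists t => // x; apply/eqP.
Qed.

Lemma eqv_preimage_lmon j : (j < l)%N -> exists2 f, f \in G &
  forall x, lev q h (lev q (map_mx sigma f) (lev q g x)) = x ^+ (q ^ (s * j)).
Proof.
move=> jl; have [f fG Ef] := (gabidulin_eqv _).1 (@lmon_in_gabidulin L n l s j jl).
by exists f => // x; rewrite -(lev_lmon n_gt0 cardL) Ef.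
Qed.

Lemma lev_h1_neq0 : lev q h 1 != 0.
Proof.
apply: contraNneq (oner_neq0 L) => h1; apply/eqP/(bij_inj h_bij).
by rewrite h1 (lev_at0 n_gt0 cardL).
Qed.

Section Generator.
Variable p : 'rV[L]_n.
Hypotheses (pG : p \in G) (p_eqv : forall x, lev q h (lev q (map_mx sigma p) (lev q g x)) = x).

Lemma p_eqv_cancel u : lev q (map_mx sigma p) (lev q g (lev q h u)) = u.
Proof. by apply: (bij_inj h_bij); rewrite p_eqv. Qed.

Lemma p_invertible : linvertible q p.
Proof.
have [g_inv _ gKV] := g_bij; have [sigma_inv sigmaK _] := sigma_bij.
apply: injF_bij => x1 x2 /(congr1 sigma).
rewrite -!lev_map -(gKV (sigma x1)) -(gKV (sigma x2)).
by move=> /(congr1 (lev q h)); rewrite !p_eqv => /(can_inj gKV)/(can_inj sigmaK).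
Qed.

Section ProperSubcode.
Hypothesis lt_ln : (l < n)%N.

Lemma lev_h_scalar mu : exists c, forall u, lev q h (mu * u) = c * lev q h u.
Proof.
have [sigma_inv _ sigmaKV] := sigma_bij; pose nu := sigma_inv mu.
have lev_map_nu f x : lev q (map_mx sigma (nu *: f)) x = mu * lev q (map_mx sigma f) x.
  by rewrite map_mxZ levZ /nu sigmaKV.
have [t tG Et] := eqv_in_gabidulin (memvZ nu pG).
have rotG j : (j < l)%N -> lrot (s * j) t \in gabidulin L n l s.
  move=> jl; have [fj fjG Efj] := eqv_preimage_lmon jl.
  have [tj tjG Etj] := eqv_in_gabidulin (memvZ nu fjG).
  suff <- : tj = lrot (s * j) t by [].
  apply: (lev_inj n_gt0 cardL) => x.
  rewrite Etj (lev_lrot n_gt0 cardL) Et !lev_map_nu; congr (lev q h (mu * _)).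
  by apply: (bij_inj h_bij); rewrite Efj p_eqv.
exists (t 0 (Ordinal n_gt0)) => u.
have := Et (lev q h u); rewrite lev_map_nu p_eqv_cancel => <-.
by rewrite {1}(gabidulin_lrot_scalar n_gt0 coprime_sn lt_ln tG rotG) levZ
  (lev_lmon n_gt0 cardL) expn0 expr1.
Qed.

Lemma lev_h_mul mu u : lev q h (mu * u) = lev q h mu / lev q h 1 * lev q h u.
Proof.
have [c hc] := lev_h_scalar mu.
by rewrite hc -[in lev q h mu](mulr1 mu) hc mulfK ?lev_h1_neq0.
Qed.

Lemma lev_h_exp w m : lev q h (w ^+ m) = (lev q h w / lev q h 1) ^+ m * lev q h 1.
Proof.
elim: m => [|m IH]; first by rewrite !expr0 mul1r.
by rewrite exprS lev_h_mul IH exprS mulrA.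
Qed.

Lemma lfrob_p_in_G_proper j : (j < l)%N -> lfrob q (s * j) p \in G.
Proof.
move=> jl; have [fj fjG Efj] := eqv_preimage_lmon jl.
have [h_inv _ hKV] := h_bij; have [sigma_inv sigmaK sigmaKV] := sigma_bij.
have [g_inv _ gKV] := g_bij.
pose lam := sigma_inv (h_inv (lev q h 1 ^+ 2 / lev q h 1 ^+ (q ^ (s * j)))).
suff -> : lfrob q (s * j) p = lam *: fj by rewrite memvZ.
apply: (lev_inj n_gt0 cardL) => x; rewrite (lev_lfrob n_gt0 cardL) levZ.
apply: (can_inj sigmaK); rewrite rmorphM rmorphXn /lam sigmaKV -!lev_map -(gKV (sigma x)).
apply: (bij_inj h_bij); rewrite lev_h_mul lev_h_exp Efj p_eqv hKV.
rewrite expr_div_n; have := expf_neq0 (q ^ (s * j)) lev_h1_neq0.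
move: (lev q h 1 ^+ (q ^ (s * j))) (g_inv (sigma x) ^+ (q ^ (s * j))) => aQ yQ aQ_neq0.
by field; rewrite lev_h1_neq0 aQ_neq0.
Qed.

End ProperSubcode.

Lemma lfrob_p_in_G j : (j < l)%N -> lfrob q (s * j) p \in G.
Proof.
case: (ltngtP l n) => [lt_ln | | l_eq_n]; first exact: lfrob_p_in_G_proper.
  by rewrite ltnNge l_le_n.
have -> : G = fullv.
  by apply/eqP; rewrite -(dimv_leqif_eq (subvf G)) dimG l_eq_n dimvf dim_matrix mul1r.
by rewrite memvf.
Qed.

End Generator.

Lemma gabidulin_generator :
  exists p, linvertible q p /\ forall j, (j < l)%N -> lfrob q (s * j) p \in G.
Proof.
have [l0 | l_gt0] := posnP l; first by exists h; split => // j; rewrite l0.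
have [p pG Ep] := eqv_preimage_lmon l_gt0.
have p_eqv x : lev q h (lev q (map_mx sigma p) (lev q g x)) = x.
  by rewrite Ep muln0 expn0 expr1.
by exists p; split; [exact: p_invertible p_eqv | exact: lfrob_p_in_G pG p_eqv].
Qed.

End GabidulinEquivalent.

Theorem lemma3p7 (L : finFieldType) (q n : nat) (n_gt0 : (0 < n)%N)
    (cardL : #|L| = (q ^ n)%N) (k l s : nat) (cop : coprime s n)
    (C G : {vspace 'rV[L]_n})
    (dimC : \dim C = k) (dimG : \dim G = l) (lk : (l <= k)%N)
    (GC : (G <= C)%VS) (mrdG : MRD q G)
    (eqG : code_equiv q G (@gabidulin L n l s)) :
  exists p : 'rV[L]_n, linvertible q p /\
    exists qs : (k - l).-tuple 'rV[L]_n,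
      C = <<(qs : seq 'rV[L]_n) ++ [seq lfrob q (s * i) p | i <- iota 0 l]>>%VS.
Proof.
have l_le_n : (l <= n)%N by have := dimvS (subvf G); rewrite dimG dimvf dim_matrix mul1r.
have [h [g [sigma [h_bij g_bij sigma_bij gabidulin_eqv]]]] := eqG.
have [p [p_bij pG]] := gabidulin_generator n_gt0 cardL cop l_le_n dimG
  h_bij g_bij sigma_bij gabidulin_eqv.
exists p; split => //.
have := complete_basis (C := C) (lfrob_free n_gt0 cardL cop l_le_n p_bij).
rewrite dimC size_map size_iota; apply.
apply/span_subvP => v /mapP[j]; rewrite mem_iota => /andP[_ jl] ->.
exact: (subvP GC) (pG j jl).
Qed.
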